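(* Let $G$ be a $6$-regular graph, $\mathcal S$ a canonical path partition of $G$, and $P$ a path component with end-vertices $o_1,o_2$. Let $x_1,x_2\in V_2$ be path neighbors on $P$, with $x_1$ immediately preceding $x_2$ when $P$ is traversed from $o_1$ to $o_2$. If $x_1$ goes to $o_1$, then every vertex that $x_2$ goes to is either $o_1$, $o_2$, or a vertex of a cycle component (i.e., $x_2$ goes to no end-vertex of a path component other than $P$).
   Context: All graphs are finite, simple and undirected. A path partition of $G=(V,E)$ is a set of vertex-disjoint paths (single vertices allowed) covering $V$; its members are components. A component with $t\ge3$ vertices is a cycle component if the subgraph induced on its vertex set has a spanning cycle; a one-vertex component is an isolated vertex; every other component is a path component. A path partition is canonical if (1) it has the minimum number of components among all path partitions of $G$; (2) among those, it has the maximum number of cycle components; (3) it has no isolated vertices. Given a canonical path partition $\mathcal S$ of $G$: two vertices are path neighbors if they are consecutive on a path component. An edge of $G$ is a free edge unless it joins two path neighbors or has both endpoints in the same cycle component. $V_1$ is the set of end-vertices of path components together with all vertices of cycle components. $V_2$ is the set of vertices not in $V_1$ that are joined by a free edge to a vertex of $V_1$. A balanced edge is a free edge with one endpoint in $V_1$ and the other in $V_2$; for $x\in V_2$, $y\in V_1$ we say $x$ goes to $y$ if $xy$ is a balanced edge. *)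

(* A simple graph is a symmetric irreflexive relation e on a finType T. *)
From mathcomp Require Import all_boot.
Set Implicit Arguments. Unset Strict Implicit. Unset Printing Implicit Defensive.

Section PathPartitions.
Variables (T : finType) (e : rel T).

Definition gpath (s : seq T) : bool :=
  if s is x :: p then path e x p else false.

Definition path_partition (S : seq (seq T)) : bool :=
  [&& all gpath S, uniq (flatten S) & [forall x, x \in flatten S]].

(* cycle component: >= 3 vertices, and the induced subgraph on its vertex set
   has a spanning cycle (some ordering of its vertices is an e-cycle) *)
Definition cycle_comp (s : seq T) : bool :=
  (2 < size s) && has (fun c => cycle e c) (permutations s).

Definition isolated_comp (s : seq T) : bool := size s == 1.
Definition path_comp (s : seq T) : bool := (1 < size s) && ~~ cycle_comp s.

Definition ncycles (S : seq (seq T)) : nat := count cycle_comp S.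

Definition canonical_pp (S : seq (seq T)) : Prop :=
  [/\ path_partition S,
      (forall S', path_partition S' -> size S <= size S'),
      (forall S', path_partition S' -> size S' = size S -> ncycles S' <= ncycles S)
    & all (fun s => ~~ isolated_comp s) S].

Variable S : seq (seq T).

Definition path_nbrs (x y : T) : Prop :=
  exists2 s, s \in S & path_comp s /\
    exists p1 p2, s = p1 ++ x :: y :: p2 \/ s = p1 ++ y :: x :: p2.

Definition same_cycle (x y : T) : Prop :=
  exists2 s, s \in S & [&& cycle_comp s, x \in s & y \in s].

Definition free_edge (x y : T) : Prop :=
  [/\ e x y, ~ path_nbrs x y & ~ same_cycle x y].

Definition in_cycle_comp (v : T) : Prop :=
  exists2 s, s \in S & cycle_comp s && (v \in s).

Definition path_end (v : T) : Prop :=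
  exists2 s, s \in S & path_comp s && ((v == head v s) || (v == last v s)).

Definition inV1 (v : T) : Prop := path_end v \/ in_cycle_comp v.

Definition inV2 (x : T) : Prop :=
  ~ inV1 x /\ exists y, inV1 y /\ free_edge x y.

Definition balanced (x y : T) : Prop :=
  free_edge x y /\ ((inV1 x /\ inV2 y) \/ (inV2 x /\ inV1 y)).

Definition goes_to (x y : T) : Prop := [/\ inV2 x, inV1 y & balanced x y].

End PathPartitions.

From mathcomp Require Import all_boot.
Set Implicit Arguments. Unset Strict Implicit. Unset Printing Implicit Defensive.

(* Suppose x2 went to an end y of another path component Q. Since x1 is
   adjacent to o1, the initial segment o1 ... x1 of P closes up into a cycle
   (it has at least three vertices, as o1 x1 is a free edge), while Q,
   oriented to end at y, can be continued by the edge y x2 along the rest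
   x2 ... o2 of P. Replacing P and Q by these two components keeps the number
   of components and gains a cycle component, against canonicity. *)

Lemma perm_to_rem2 (T : eqType) (s : seq T) (x y : T) :
  x \in s -> y \in s -> y != x -> perm_eq s (x :: y :: rem y (rem x s)).
Proof.
move=> xs ys yx; apply: perm_trans (perm_to_rem xs) _.
by rewrite perm_cons perm_to_rem // rem_mem.
Qed.

Section GraphPaths.
Variables (T : finType) (e : rel T).

Lemma gpath_cat (x : T) (s1 s2 : seq T) :
  gpath e s1 -> gpath e s2 -> e (last x s1) (head x s2) -> gpath e (s1 ++ s2).
Proof.
case: s1 => [|a p] //= Hp; case: s2 => [|b q] /= Hq Hlast; first by rewrite cats0.
by rewrite cat_path Hp /= Hlast.
Qed.

Lemma cycle_comp_closed_path (x : T) (p : seq T) :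
  1 < size p -> path e x p -> e (last x p) x -> cycle_comp e (x :: p).
Proof.
move=> Hsize Hp Hclose; rewrite /cycle_comp /= ltnS Hsize /=.
by apply/hasP; exists (x :: p); rewrite ?mem_permutations //= rcons_path Hp.
Qed.

Hypothesis e_sym : symmetric e.

Lemma gpath_rev (s : seq T) : gpath e (rev s) = gpath e s.
Proof.
case: s => [|x p] //=; rewrite lastI rev_rcons /= rev_path.
by apply: eq_path => a b; rewrite /= e_sym.
Qed.

Lemma gpath_orient (s : seq T) (v : T) :
  gpath e s -> (v == head v s) || (v == last v s) ->
  exists s', [/\ perm_eq s' s, gpath e s' & last v s' = v].
Proof.
move=> Hs /orP [/eqP Hv | /eqP Hv]; last by exists s; rewrite perm_refl.
exists (rev s); rewrite perm_rev gpath_rev; split=> //.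
by case: s Hs Hv => [|x p] //= _ ->; rewrite rev_cons last_rcons.
Qed.

End GraphPaths.

Section Exchange.
Variables (T : finType) (e : rel T) (S : seq (seq T)).

Lemma path_partition_exchange (A B A' B' : seq T) (R : seq (seq T)) :
  path_partition e S -> perm_eq S (A :: B :: R) ->
  perm_eq (A' ++ B') (A ++ B) -> gpath e A' -> gpath e B' ->
  path_partition e (A' :: B' :: R).
Proof.
case/and3P=> Hpaths Huniq Hcover HS HAB HA' HB'.
have Hflat : perm_eq (flatten (A' :: B' :: R)) (flatten S).
  rewrite perm_sym; apply: perm_trans (perm_flatten HS) _.
  by rewrite /= !catA perm_cat2r perm_sym.
apply/and3P; split; last 2 first.
- by rewrite (perm_uniq Hflat).
- by apply/forallP => v; rewrite (perm_mem Hflat); move/forallP: Hcover.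
by rewrite (perm_all _ HS) in Hpaths; case/and3P: Hpaths => _ _; rewrite /= HA' HB'.
Qed.

Lemma canonical_pp_exchange (A B A' B' : seq T) (R : seq (seq T)) :
  canonical_pp e S -> perm_eq S (A :: B :: R) ->
  path_partition e (A' :: B' :: R) ->
  cycle_comp e A' + cycle_comp e B' <= cycle_comp e A + cycle_comp e B.
Proof.
case=> _ _ Hmax _ HS Hpp'.
have := Hmax _ Hpp'; rewrite (perm_size HS) => /(_ erefl).
by rewrite /ncycles (permP HS) /= !addnA leq_add2r.
Qed.

Hypothesis e_sym : symmetric e.

Lemma canonical_pp_no_reroute (P Q C D : seq T) (d y : T) :
  canonical_pp e S -> P \in S -> Q \in S -> Q != P ->
  path_comp e P -> path_comp e Q ->
  P = C ++ d :: D -> gpath e C -> cycle_comp e C ->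
  (y == head y Q) || (y == last y Q) -> e y d -> False.
Proof.
move=> HS PS QS QP /andP [_ /negbTE HPc] /andP [_ /negbTE HQc] HP HC HCc Hy Hyd.
have [Hpp _ _ _] := HS.
have gpathS : {in S, forall s, gpath e s}.
  by case/and3P: Hpp => /allP.
have [Q' [HQ' HQ'path HQ'last]] := gpath_orient e_sym (gpathS Q QS) Hy.
have HdD : path e d D.
  move: (gpathS P PS); rewrite HP; case: (C) => [|c p] //=.
  by rewrite cat_path => /andP [_ /andP []].
have HSR := perm_to_rem2 PS QS QP.
have Hpp' : path_partition e (C :: (Q' ++ d :: D) :: rem Q (rem P S)).
  apply: path_partition_exchange Hpp HSR _ HC _.
    by rewrite HP -catA perm_cat2l perm_catC perm_cat2l.
  by apply: (gpath_cat (x := y)) => //=; rewrite HQ'last.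
have := canonical_pp_exchange HS HSR Hpp'.
by rewrite HCc HPc HQc.
Qed.

End Exchange.

Theorem mainTheorem7 (T : finType) (e : rel T)
  (e_sym : symmetric e) (e_irr : irreflexive e)
  (e_reg6 : forall v : T, #|[set u | e v u]| = 6)
  (S : seq (seq T)) (HS : canonical_pp e S)
  (P : seq T) (HPS : P \in S) (HPpath : path_comp e P)
  (o1 o2 x1 x2 : T)
  (Hends : exists mid, P = o1 :: rcons mid o2)
  (Hx : exists p1 p2, P = p1 ++ x1 :: x2 :: p2)
  (Hx1 : inV2 e S x1) (Hx2 : inV2 e S x2)
  (Hgo : goes_to e S x1 o1) :
  forall y : T, goes_to e S x2 y ->
    y = o1 \/ y = o2 \/ in_cycle_comp e S y.
Proof.
move=> y [_ [[Q QS /andP [HQpath Hy]] | Hcyc] [[Hx2y _ _] _]]; last by right; right.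
case: (eqVneq y o1) => [|yo1]; first by left.
case: (eqVneq y o2) => [|yo2]; first by right; left.
exfalso; have [mid HP] := Hends; have [p1 [p2 HPx]] := Hx.
have [_ _ [[Hx1o1 Hx1o1_not_nbrs _] _]] := Hgo.
have [Hx1_notV1 _] := Hx1.
have QP : Q != P.
  apply: contraTneq Hy => ->; rewrite HP /= last_rcons.
  by rewrite (negbTE yo1) (negbTE yo2).
case: p1 HPx => [|o p1] HPx.
  by apply: Hx1_notV1; left; exists P; rewrite // HPpath HPx /= eqxx.
have Ho : o = o1 by move: HPx; rewrite HP => -[].
subst o; case: p1 HPx => [|z p1] HPx.
  by apply: Hx1o1_not_nbrs; exists P => //; split=> //; exists [::], (x2 :: p2); right.
have HPC : P = (o1 :: rcons (z :: p1) x1) ++ x2 :: p2 by rewrite HPx /= -cat_rcons.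
have gP : gpath e P by case: HS => /and3P [/allP + _ _] _ _ _; apply.
have HCpath : path e o1 (rcons (z :: p1) x1).
  have : path e o1 (rcons (z :: p1) x1 ++ x2 :: p2) by rewrite HPC in gP.
  by rewrite cat_path => /andP [].
apply: (canonical_pp_no_reroute e_sym HS HPS QS QP HPpath HQpath HPC) Hy _ => //.
  by apply: cycle_comp_closed_path; rewrite // ?size_rcons ?last_rcons.
by rewrite e_sym.
Qed.
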